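(* Let $L_A$ and $L_B$ be two orderings (lists) of the same set $\mathbb{E}$ of $n$ elements, let $e\in\mathbb{E}$ have position $x$ in $L_A$, and let $y\ge 1$ be an integer such that the position of $e$ in $L_B$ is at most $y$. Let $\phi$ denote the number of inversions between $L_A$ and $L_B$ (ordered pairs $(i,j)$ with $i$ before $j$ in $L_A$ and after $j$ in $L_B$), and let $\Delta\phi$ be the change in $\phi$ when $e$ is moved to the front of $L_A$ (keeping the relative order of the other elements) while $L_B$ is unchanged. Then $$3x+4\Delta\phi-\psi(x,y)\le 0,$$ where $\psi(x,y)=7x$ if $1\le x\le y$, $\psi(x,y)=8y-x$ if $y\le x\le 8y$, and $\psi(x,y)=0$ if $x\ge 8y$.
   Context: Positions in a list are numbered $1,\dots,n$ from the head. *)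

(* Lists are seq T over an eqType; positions are 1-based:
   the position of a in s is (index a s).+1. *)
From mathcomp Require Import all_boot all_order all_algebra.
Set Implicit Arguments. Unset Strict Implicit. Unset Printing Implicit Defensive.
Import Order.TTheory GRing.Theory Num.Theory.

Definition before (T : eqType) (s : seq T) (a b : T) : bool :=
  (index a s < index b s)%N.

Definition inversions (T : eqType) (LA LB : seq T) : nat :=
  (\sum_(i <- LA) \sum_(j <- LA) (before LA i j && before LB j i))%N.

Definition move_to_front (T : eqType) (e : T) (L : seq T) : seq T :=
  e :: filter (predC1 e) L.

Definition psi (x y : nat) : int :=
  if (x <= y)%N then Posz (7 * x)
  else if (x <= 8 * y)%N then (Posz (8 * y) - Posz x)%R
  else 0%R.

From mathcomp Require Import all_boot all_order all_algebra.
From mathcomp Require Import zify.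
Set Implicit Arguments. Unset Strict Implicit. Unset Printing Implicit Defensive.
Import Order.TTheory GRing.Theory Num.Theory.

(* Write LA = s1 ++ e :: s2, so that x = size s1 + 1.  Moving e
   to the front only changes the inversions between e and the elements of s1:
   before the move, the pairs (a, e) with a in s1 and e before a in LB are
   inversions; after it, the pairs (e, a) with a in s1 and a before e in LB.
   Writing c for the number of a in s1 preceding e in LB, every other element
   of s1 follows e in LB, hence  Delta phi = c - (size s1 - c) = 2c - (x - 1).
   At most index e LB < y elements of any duplicate-free list precede e in LB,
   so c <= y - 1, and trivially c <= x - 1.  The bound 3x + 4 Delta phi <= psi
   is then a linear-arithmetic consequence of these two inequalities. *)

Section Inversions.
Variable T : eqType.
Implicit Types (L r s : seq T) (a e : T).

Lemma sum_bool_count (P : pred T) s :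
  (\sum_(j <- s) (P j : nat))%N = count P s.
Proof. by elim: s => [|a s IH]; rewrite ?big_nil ?big_cons ?IH. Qed.

Lemma inversions_cons L a r : a \notin r ->
  inversions (a :: r) L = (count (fun j => before L j a) r + inversions r L)%N.
Proof.
move=> a_r; rewrite /inversions big_cons big_cons /before index_head ltnn /=.
have a_neq j : j \in r -> (a == j) = false.
  by move=> j_r; apply: contraNF a_r => /eqP ->.
congr (_ + _)%N.
  rewrite -sum_bool_count; apply: eq_big_seq => j j_r.
  by rewrite a_neq.
apply: eq_big_seq => i i_r; rewrite big_cons a_neq //= eqxx ltn0 add0n.
by apply: eq_big_seq => j j_r; rewrite !a_neq.
Qed.

Lemma inversions_insert L e (s1 s2 : seq T) : uniq (s1 ++ e :: s2) ->
  inversions (s1 ++ e :: s2) L =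
  (inversions (s1 ++ s2) L + count (before L e) s1
     + count (fun j => before L j e) s2)%N.
Proof.
elim: s1 => [|a s1 IH] /=.
  by case/andP=> e_s2 _; rewrite inversions_cons //; lia.
case/andP=> a_fresh uniq_rest.
have a_s12 : a \notin s1 ++ s2.
  by move: a_fresh; rewrite !mem_cat in_cons !negb_or => /and3P[-> _ ->].
rewrite inversions_cons // inversions_cons // IH // !count_cat /=.
lia.
Qed.

Lemma count_before_le_index L e s : uniq s ->
  (count (fun j => before L j e) s <= index e L)%N.
Proof.
move=> uniq_s; rewrite -size_filter.
have -> : index e L = size (take (index e L) L).
  by rewrite size_takel // index_size.
apply: uniq_leq_size; first exact: filter_uniq.
move=> j; rewrite mem_filter /before => /andP[j_before_e _].
by rewrite in_take_leq // index_size.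
Qed.

Lemma before_total L a b : a \in L -> b \in L -> a != b ->
  before L a b = ~~ before L b a.
Proof.
move=> aL bL ab; rewrite /before -leqNgt ltn_neqAle.
suff -> : index a L != index b L by [].
apply: contra ab => /eqP same_index.
by rewrite -(nth_index a aL) same_index nth_index.
Qed.

Lemma count_before_split L e s : e \in L -> {subset s <= L} -> e \notin s ->
  (count (before L e) s + count (fun j => before L j e) s = size s)%N.
Proof.
move=> eL sL e_s; rewrite -(count_predC (before L e) s); congr (_ + _)%N.
apply: eq_in_count => j j_s /=.
have ej : e != j by apply: contraNneq e_s => ->.
by rewrite (before_total eL (sL j j_s) ej) negbK.
Qed.

Lemma move_to_front_delta L e (s1 s2 : seq T) :
  uniq (s1 ++ e :: s2) -> {subset s1 ++ e :: s2 <= L} ->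
  (Posz (inversions (move_to_front e (s1 ++ e :: s2)) L)
     - Posz (inversions (s1 ++ e :: s2) L)
   = 2 * Posz (count (fun j => before L j e) s1) - Posz (size s1))%R.
Proof.
move=> uniq_LA sub_L.
have := uniq_LA; rewrite cat_uniq /= => /and3P[_ /norP[e_s1 _] /andP[e_s2 _]].
have keep s : e \notin s -> filter (predC1 e) s = s.
  by move=> e_s; apply/all_filterP/allP => j j_s /=; apply: contraNneq e_s => <-.
have e_L : e \in L by apply: sub_L; rewrite mem_cat mem_head orbT.
have s1_L : {subset s1 <= L} by move=> j j_s1; apply: sub_L; rewrite mem_cat j_s1.
rewrite /move_to_front filter_cat /= eqxx /= !keep //.
rewrite inversions_cons ?mem_cat ?negb_or ?e_s1 // inversions_insert // count_cat.
have := count_before_split e_L s1_L e_s1.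
lia.
Qed.

End Inversions.

Lemma psi_bound (k y c : nat) : (c <= k)%N -> (c < y)%N ->
  (Posz (3 * k.+1) + Posz 4 * (2 * Posz c - Posz k) - psi k.+1 y <= 0)%R.
Proof. by move=> c_k c_y; rewrite /psi; case: ifP => ?; [|case: ifP => ?]; lia. Qed.

Theorem mainTheorem8 (T : eqType) (n : nat) (LA LB : seq T) (e : T) (x y : nat) :
  uniq LA -> perm_eq LA LB -> size LA = n ->
  e \in LA -> x = (index e LA).+1 ->
  (1 <= y)%N -> ((index e LB).+1 <= y)%N ->
  (Posz (3 * x)
   + Posz 4 * (Posz (inversions (move_to_front e LA) LB) - Posz (inversions LA LB))
   - psi x y <= 0)%R.
Proof.
move=> uniq_LA perm_AB _ e_LA -> _ pos_e_B.
case/splitPr: e_LA uniq_LA perm_AB => s1 s2 uniq_LA perm_AB.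
have sub_LB : {subset s1 ++ e :: s2 <= LB} by move=> j; rewrite (perm_mem perm_AB).
have := uniq_LA; rewrite cat_uniq /= => /and3P[uniq_s1 /norP[e_s1 _] _].
rewrite index_pivot // move_to_front_delta //.
apply: psi_bound; first exact: count_size.
exact: leq_ltn_trans (count_before_le_index LB e uniq_s1) pos_e_B.
Qed.
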